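(* Let $k\in\mathbb{R}_{\ge0}$ and $p\in\mathbb{R}_+$. Let $(x,y,z)$ be a triple of the classical Euclid tree with $x,y,z>k/p$, $(X,Y,Z)$ the corresponding triple of the $k$-generalized Euclid tree, and $(l,m,n)=(X/x,Y/y,Z/z)$. If $\max(|l-m|,|m-n|,|l-n|)<2p$, then for every $i\in\{1,2,3\}$ the comparison triple $(l',m',n')$ of $\mathcal{M}_{i;k}(X,Y,Z)$ and $\mathcal{M}_i(x,y,z)$ also satisfies $\max(|l'-m'|,|m'-n'|,|l'-n'|)<2p$; hence this bound persists under any further sequence of mutations.
   Context: For $k\in\mathbb{R}_{\ge0}$: $\mathcal{M}_{1;k}(X,Y,Z)=(k+Y+Z,Y,Z)$, $\mathcal{M}_{2;k}(X,Y,Z)=(X,k+X+Z,Z)$, $\mathcal{M}_{3;k}(X,Y,Z)=(X,Y,k+X+Y)$ on $\mathbb{R}_+^3$, $\mathcal{M}_i=\mathcal{M}_{i;0}$. The classical Euclid tree consists of triples obtained from a $0$-initial triple $(a,b,c)\in\mathbb{R}_+^3$ by applying the $\mathcal{M}_i$ along a finite reduced index sequence (consecutive indices distinct); the $k$-generalized Euclid tree consists of triples obtained from a $k$-initial triple $(A,B,C)\in\mathbb{R}_+^3$ ($A\ne B+C+k$, $B\ne A+C+k$, $C\ne A+B+k$) by applying the $\mathcal{M}_{i;k}$; corresponding triples are obtained along the same index sequence. *)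

From Stdlib Require Import Reals List.
Open Scope R_scope.

Definition triple := (R * R * R)%type.

Inductive idx := I1 | I2 | I3.

(* The k-generalized mutation M_{i;k}; M_i = M_{i;0}. *)
Definition mut (k : R) (i : idx) (t : triple) : triple :=
  match t with (X, Y, Z) =>
    match i with
    | I1 => (k + Y + Z, Y, Z)
    | I2 => (X, k + X + Z, Z)
    | I3 => (X, Y, k + X + Y)
    end
  end.

(* Apply the mutations along an index sequence, first element first. *)
Definition apply_seq (k : R) (s : list idx) (t : triple) : triple :=
  fold_left (fun acc i => mut k i acc) s t.

Fixpoint reduced (s : list idx) : Prop :=
  match s with
  | nil => True
  | i :: s' =>
      match s' with
      | nil => True
      | j :: _ => i <> j /\ reduced s'
      end
  end.

Definition k_initial (k : R) (t : triple) : Prop :=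
  match t with (A, B, C) =>
    0 < A /\ 0 < B /\ 0 < C /\
    A <> B + C + k /\ B <> A + C + k /\ C <> A + B + k
  end.

Definition comparison (T t : triple) : triple :=
  match T, t with (X, Y, Z), (x, y, z) => (X / x, Y / y, Z / z) end.

Definition spread (u : triple) : R :=
  match u with (l, m, n) =>
    Rmax (Rabs (l - m)) (Rmax (Rabs (m - n)) (Rabs (l - n)))
  end.

(* A mutation replaces one comparison ratio by (k + Y + Z)/(y + z), where Y = m y and Z = n z.
   Its distance to m is (k + (n - m) z)/(y + z); since k < p y and |n - m| < 2p, this is less
   than 2p in absolute value, and symmetrically for n.  The third gap is untouched.  The
   hypothesis k/p < entries survives classical mutations because they only increase entries,
   so the bound propagates along any sequence of mutations. *)
From Stdlib Require Import Reals Lra Psatz.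
Open Scope R_scope.

Definition entries_gt (c : R) (t : triple) : Prop :=
  let '(x, y, z) := t in c < x /\ c < y /\ c < z.

Lemma spread_lt (l m n d : R) :
  spread (l, m, n) < d <->
  Rabs (l - m) < d /\ Rabs (m - n) < d /\ Rabs (l - n) < d.
Proof.
  unfold spread; split.
  - intros H.
    pose proof (Rmax_l (Rabs (l - m)) (Rmax (Rabs (m - n)) (Rabs (l - n)))).
    pose proof (Rmax_r (Rabs (l - m)) (Rmax (Rabs (m - n)) (Rabs (l - n)))).
    pose proof (Rmax_l (Rabs (m - n)) (Rabs (l - n))).
    pose proof (Rmax_r (Rabs (m - n)) (Rabs (l - n))).
    lra.
  - intros (Hlm & Hmn & Hln). now repeat apply Rmax_lub_lt.
Qed.

Lemma mediant_sub_lt (k p Y Z y z : R) :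
  0 <= k -> 0 < y -> 0 < z -> k < p * y ->
  Rabs (Z / z - Y / y) < 2 * p ->
  Rabs ((k + Y + Z) / (y + z) - Y / y) < 2 * p.
Proof.
  intros Hk Hy Hz Hky Hgap.
  set (m := Y / y) in *; set (n := Z / z) in *.
  assert (Hdiff : ((k + Y + Z) / (y + z) - m) * (y + z) = k + (n - m) * z)
    by (unfold m, n; field; lra).
  apply Rabs_def2 in Hgap as [Hup Hlow].
  apply Rabs_def1; nra.
Qed.

Lemma mediant_gaps_lt (k p Y Z y z : R) :
  0 <= k -> 0 < y -> 0 < z -> k < p * y -> k < p * z ->
  Rabs (Y / y - Z / z) < 2 * p ->
  Rabs ((k + Y + Z) / (y + z) - Y / y) < 2 * p /\
  Rabs ((k + Y + Z) / (y + z) - Z / z) < 2 * p.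
Proof.
  intros Hk Hy Hz Hky Hkz Hgap; split.
  - apply mediant_sub_lt; auto. now rewrite Rabs_minus_sym.
  - replace (k + Y + Z) with (k + Z + Y) by ring.
    rewrite (Rplus_comm y z). now apply mediant_sub_lt.
Qed.

Lemma lt_mul_of_div_lt (k p x : R) : 0 < p -> k / p < x -> k < p * x.
Proof.
  intros Hp H.
  assert (Hk : p * (k / p) = k) by (field; lra).
  nra.
Qed.

Lemma div_nonneg (k p : R) : 0 <= k -> 0 < p -> 0 <= k / p.
Proof. intros Hk Hp. apply Rmult_le_pos; [exact Hk | apply Rlt_le, Rinv_0_lt_compat, Hp]. Qed.

Lemma entries_gt_mut0 (c : R) (i : idx) (t : triple) :
  0 <= c -> entries_gt c t -> entries_gt c (mut 0 i t).
Proof. destruct t as [[x y] z]; destruct i; simpl; lra. Qed.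

Lemma spread_comparison_mut_lt (k p : R) (i : idx) (T t : triple) :
  0 <= k -> 0 < p -> entries_gt (k / p) t ->
  spread (comparison T t) < 2 * p ->
  spread (comparison (mut k i T) (mut 0 i t)) < 2 * p.
Proof.
  destruct T as [[X Y] Z], t as [[x y] z].
  intros Hk Hp (Hx & Hy & Hz) Hs.
  apply lt_mul_of_div_lt in Hx, Hy, Hz; try exact Hp.
  assert (0 < x /\ 0 < y /\ 0 < z) as (Hx0 & Hy0 & Hz0) by nra.
  apply spread_lt in Hs as (Hxy & Hyz & Hxz).
  destruct i; cbn [mut comparison]; rewrite !Rplus_0_l, spread_lt.
  - destruct (mediant_gaps_lt k p Y Z y z Hk Hy0 Hz0 Hy Hz Hyz) as [H1 H2].
    repeat split; assumption.
  - destruct (mediant_gaps_lt k p X Z x z Hk Hx0 Hz0 Hx Hz Hxz) as [H1 H2].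
    rewrite Rabs_minus_sym in H1; repeat split; assumption.
  - destruct (mediant_gaps_lt k p X Y x y Hk Hx0 Hy0 Hx Hy Hxy) as [H1 H2].
    rewrite Rabs_minus_sym in H1, H2; repeat split; assumption.
Qed.

Lemma spread_comparison_apply_seq_lt (k p : R) (s : list idx) (T t : triple) :
  0 <= k -> 0 < p -> entries_gt (k / p) t ->
  spread (comparison T t) < 2 * p ->
  spread (comparison (apply_seq k s T) (apply_seq 0 s t)) < 2 * p.
Proof.
  intros Hk Hp; revert T t.
  induction s as [|i s IH]; intros T t Ht Hs; simpl; [assumption|].
  apply IH.
  - apply entries_gt_mut0; [apply div_nonneg|]; assumption.
  - now apply spread_comparison_mut_lt.
Qed.

Theorem lemma5p7 (k p : R) (a b c A B C : R) (s : list idx) :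
  0 <= k -> 0 < p ->
  k_initial 0 (a, b, c) -> k_initial k (A, B, C) -> reduced s ->
  (let '(x, y, z) := apply_seq 0 s (a, b, c) in
   k / p < x /\ k / p < y /\ k / p < z) ->
  spread (comparison (apply_seq k s (A, B, C)) (apply_seq 0 s (a, b, c))) < 2 * p ->
  (forall i : idx,
     spread (comparison (mut k i (apply_seq k s (A, B, C)))
                        (mut 0 i (apply_seq 0 s (a, b, c)))) < 2 * p) /\
  (forall s' : list idx,
     spread (comparison (apply_seq k s' (apply_seq k s (A, B, C)))
                        (apply_seq 0 s' (apply_seq 0 s (a, b, c)))) < 2 * p).
Proof.
  intros Hk Hp _ _ _ Hentries Hs.
  split.
  - intros i. now apply spread_comparison_mut_lt.
  - intros s'. now apply spread_comparison_apply_seq_lt.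
Qed.
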